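(* The category $\mathrm{Ar}$ of arities has all finite limits and all (small) colimits.
   Context: Conventions: for endofunctors $F,G$ of ${\mathsf{Set}}$, $F\cdot G$ denotes the composite $F\circ G$ (apply $G$ first); whiskering of a natural transformation $\alpha$ by a functor is written $F\alpha$ or $\alpha F$. An endofunctor of ${\mathsf{Set}}$ is $\omega$-cocontinuous if it preserves colimits of $\omega$-chains; $\mathrm{End}^\omega({\mathsf{Set}})$ is the category of such endofunctors and natural transformations. Modules: let $R=(R,\mu,\eta)$ be a monad on ${\mathsf{Set}}$. An $R$-module (with range ${\mathsf{Set}}$) is a functor $M\colon{\mathsf{Set}}\to{\mathsf{Set}}$ with a natural transformation $\rho^M\colon M\cdot R\to M$ such that $\rho^M\circ \rho^M R=\rho^M\circ M\mu$ and $\rho^M\circ M\eta=1_M$. A morphism of $R$-modules is a natural transformation commuting with the actions. $R$ is itself an $R$-module with action $\mu$. If $f\colon R\to S$ is a monad morphism and $N$ an $S$-module, $f^*N$ denotes the functor $N$ with $R$-action $\rho^N\circ Nf$. $\mathrm{Mon}^\omega$ is the category of monads on ${\mathsf{Set}}$ whose underlying functor is $\omega$-cocontinuous. The big module category $\mathrm{BMod}^\omega$ has objects pairs $(R,M)$ with $R\in\mathrm{Mon}^\omega$ and $M$ an $\omega$-cocontinuous $R$-module, and morphisms $(R,M)\to(S,N)$ pairs $(f,m)$ with $f\colon R\to S$ a monad morphism and $m\colon M\to f^*N$ a morphism of $R$-modules; let $\pi\colon\mathrm{BMod}^\omega\to\mathrm{Mon}^\omega$ be the forgetful functor $(R,M)\mapsto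 R$. An arity is a functor $a\colon\mathrm{Mon}^\omega\to\mathrm{BMod}^\omega$ with $\pi\circ a=\mathrm{id}$. A morphism of arities $a_1\to a_2$ is a natural transformation $m\colon a_1\to a_2$ such that $\pi m$ is the identity natural transformation. This defines the category $\mathrm{Ar}$ (a subcategory of the functor category from $\mathrm{Mon}^\omega$ to $\mathrm{BMod}^\omega$). *)

From Stdlib Require Import List.
Unset Implicit Arguments.
Unset Strict Implicit.

Definition SET := Type.

Record Functor : Type := {
  fobj :> SET -> SET;
  fmap : forall (A B : SET), (A -> B) -> fobj A -> fobj B;
  fmap_id : forall (A : SET) (x : fobj A), fmap A A (fun a => a) x = x;
  fmap_comp : forall (A B C : SET) (f : A -> B) (g : B -> C) (x : fobj A),
      fmap A C (fun a => g (f a)) x = fmap B C g (fmap A B f x) }.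
Arguments fmap f {A B} _ _ : rename.

Definition is_cocone_chain (X : nat -> SET) (s : forall n, X n -> X (S n))
    (C : SET) (c : forall n, X n -> C) : Prop :=
  forall n (x : X n), c (S n) (s n x) = c n x.

Definition is_colim_chain (X : nat -> SET) (s : forall n, X n -> X (S n))
    (C : SET) (c : forall n, X n -> C) : Prop :=
  is_cocone_chain X s C c /\
  forall (D : SET) (d : forall n, X n -> D), is_cocone_chain X s D d ->
    exists u : C -> D, (forall n x, u (c n x) = d n x) /\
      (forall v : C -> D, (forall n x, v (c n x) = d n x) -> forall y, v y = u y).

Definition omega_cocont (F : Functor) : Prop :=
  forall (X : nat -> SET) (s : forall n, X n -> X (S n)) (C : SET)
         (c : forall n, X n -> C),
    is_colim_chain X s C c ->
    is_colim_chain (fun n => F (X n)) (fun n => fmap F (s n)) (F C)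
                   (fun n => fmap F (c n)).

Record Monad : Type := {
  mfun :> Functor;
  ret : forall A : SET, A -> mfun A;
  join : forall A : SET, mfun (mfun A) -> mfun A;
  ret_nat : forall (A B : SET) (f : A -> B) (x : A),
      fmap mfun f (ret A x) = ret B (f x);
  join_nat : forall (A B : SET) (f : A -> B) (x : mfun (mfun A)),
      fmap mfun f (join A x) = join B (fmap mfun (fmap mfun f) x);
  join_assoc : forall (A : SET) (x : mfun (mfun (mfun A))),
      join A (join (mfun A) x) = join A (fmap mfun (join A) x);
  join_ret_l : forall (A : SET) (x : mfun A), join A (ret (mfun A) x) = x;
  join_ret_r : forall (A : SET) (x : mfun A), join A (fmap mfun (ret A) x) = x }.
Arguments ret m {A} _ : rename.
Arguments join m {A} _ : rename.

Record OMonad : Type := {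
  omon :> Monad;
  omon_omega : omega_cocont omon }.

Record MonMor (R S : Monad) : Type := {
  mm : forall A : SET, R A -> S A;
  mm_nat : forall (A B : SET) (f : A -> B) (x : R A),
      mm B (fmap R f x) = fmap S f (mm A x);
  mm_ret : forall (A : SET) (x : A), mm A (ret R x) = ret S x;
  mm_join : forall (A : SET) (x : R (R A)),
      mm A (join R x) = join S (fmap S (mm A) (mm (R A) x)) }.
Arguments mm {R S} f {A} _ : rename.

Definition MonMor_id (R : Monad) : MonMor R R.
Proof.
  refine (@Build_MonMor R R (fun A x => x) _ _ _).
  - reflexivity.
  - reflexivity.
  - intros A x. now rewrite fmap_id.
Defined.

Definition MonMor_comp (R S T : Monad) (f : MonMor R S) (g : MonMor S T) : MonMor R T.
Proof.
  refine (@Build_MonMor R T (fun A x => mm g (mm f x)) _ _ _).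
  - intros A B h x. now rewrite mm_nat, mm_nat.
  - intros A x. now rewrite mm_ret, mm_ret.
  - intros A x. rewrite mm_join, mm_join, mm_nat.
    f_equal. symmetry. apply (fmap_comp T).
Defined.
Arguments MonMor_comp {R S T} f g.

Record Module (R : Monad) : Type := {
  mod_fun :> Functor;
  act : forall A : SET, mod_fun (R A) -> mod_fun A;
  act_nat : forall (A B : SET) (f : A -> B) (x : mod_fun (R A)),
      act B (fmap mod_fun (fmap R f) x) = fmap mod_fun f (act A x);
  act_assoc : forall (A : SET) (x : mod_fun (R (R A))),
      act A (act (R A) x) = act A (fmap mod_fun (join R (A:=A)) x);
  act_unit : forall (A : SET) (x : mod_fun A),
      act A (fmap mod_fun (ret R (A:=A)) x) = x }.
Arguments act {R} m {A} _ : rename.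

Record OModule (R : Monad) : Type := {
  omod :> Module R;
  omod_omega : omega_cocont omod }.

(* A morphism of R-modules  M -> f^* N , for f : R -> S a monad morphism and
   N an S-module (f^* N has action  act N o N f). *)
Record ModMor (R S : Monad) (f : MonMor R S) (M : Module R) (N : Module S) : Type := {
  modm : forall A : SET, M A -> N A;
  modm_nat : forall (A B : SET) (h : A -> B) (x : M A),
      modm B (fmap M h x) = fmap N h (modm A x);
  modm_act : forall (A : SET) (x : M (R A)),
      modm A (act M x) = act N (fmap N (mm f (A:=A)) (modm (R A) x)) }.
Arguments ModMor {R S} f M N.
Arguments modm {R S f M N} m {A} _ : rename.

(* Arities: functors a : Mon^omega -> BMod^omega with pi o a = id.  Such a
   functor sends R to (R, a_R) and f : R -> S to (f, a_f) with
   a_f : a_R -> f^* a_S; functoriality is stated componentwise. *)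
Record Arity : Type := {
  ar_mod : forall R : OMonad, OModule R;
  ar_map : forall (R S : OMonad) (f : MonMor R S), ModMor f (ar_mod R) (ar_mod S);
  ar_map_id : forall (R : OMonad) (A : SET) (x : ar_mod R A),
      modm (ar_map R R (MonMor_id R)) x = x;
  ar_map_comp : forall (R S T : OMonad) (f : MonMor R S) (g : MonMor S T)
      (A : SET) (x : ar_mod R A),
      modm (ar_map R T (MonMor_comp f g)) x = modm (ar_map S T g) (modm (ar_map R S f) x) }.
Arguments ar_mod a R : rename.
Arguments ar_map a {R S} f : rename.

(* Morphisms of arities: natural transformations m : a -> b with pi m = id,
   i.e. for each R a morphism (id_R, m_R) in BMod, natural in R. *)
Record ArMor (a b : Arity) : Type := {
  arm : forall R : OMonad, ModMor (MonMor_id R) (ar_mod a R) (ar_mod b R);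
  arm_nat : forall (R S : OMonad) (f : MonMor R S) (A : SET) (x : ar_mod a R A),
      modm (ar_map b f) (modm (arm R) x) = modm (arm S) (modm (ar_map a f) x) }.
Arguments arm {a b} m R : rename.

Definition armc (a b : Arity) (m : ArMor a b) (R : OMonad) (A : SET)
    (x : ar_mod a R A) : ar_mod b R A :=
  modm (arm m R) x.
Arguments armc {a b} m {R A} x.

Record SmallCat : Type := {
  cob : SET;
  chom : cob -> cob -> SET;
  cid : forall j, chom j j;
  ccomp : forall i j k, chom i j -> chom j k -> chom i k;
  ccomp_id_l : forall i j (u : chom i j), ccomp i i j (cid i) u = u;
  ccomp_id_r : forall i j (u : chom i j), ccomp i j j u (cid j) = u;
  ccomp_assoc : forall i j k l (u : chom i j) (v : chom j k) (w : chom k l),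
      ccomp i k l (ccomp i j k u v) w = ccomp i j l u (ccomp j k l v w) }.
Arguments chom {J} j k : rename.
Arguments cid {J} j : rename.
Arguments ccomp {J i j k} u v : rename.

Definition finite_cat (J : SmallCat) : Prop :=
  (exists l : list (cob J), forall j, In j l) /\
  (forall j k : cob J, exists l : list (chom j k), forall u, In u l).

(* Diagrams J -> Ar (equality of arity morphisms is componentwise). *)
Record Diagram (J : SmallCat) : Type := {
  dob : cob J -> Arity;
  dhom : forall j k, chom j k -> ArMor (dob j) (dob k);
  dhom_id : forall j (R : OMonad) (A : SET) (x : ar_mod (dob j) R A),
      armc (dhom j j (cid j)) x = x;
  dhom_comp : forall i j k (u : chom i j) (v : chom j k) (R : OMonad) (A : SET)
      (x : ar_mod (dob i) R A),
      armc (dhom i k (ccomp u v)) x = armc (dhom j k v) (armc (dhom i j u) x) }.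
Arguments dob {J} d j : rename.
Arguments dhom {J} d {j k} u : rename.

Definition is_cone (J : SmallCat) (D : Diagram J) (L : Arity)
    (p : forall j, ArMor L (dob D j)) : Prop :=
  forall j k (u : chom j k) (R : OMonad) (A : SET) (x : ar_mod L R A),
    armc (dhom D u) (armc (p j) x) = armc (p k) x.
Arguments is_cone {J} D {L} p.

Definition is_limit (J : SmallCat) (D : Diagram J) (L : Arity)
    (p : forall j, ArMor L (dob D j)) : Prop :=
  is_cone D p /\
  forall (L' : Arity) (p' : forall j, ArMor L' (dob D j)), is_cone D p' ->
    exists u : ArMor L' L,
      (forall j (R : OMonad) (A : SET) (x : ar_mod L' R A),
          armc (p j) (armc u x) = armc (p' j) x) /\
      (forall v : ArMor L' L,
          (forall j (R : OMonad) (A : SET) (x : ar_mod L' R A),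
              armc (p j) (armc v x) = armc (p' j) x) ->
          forall (R : OMonad) (A : SET) (x : ar_mod L' R A), armc v x = armc u x).
Arguments is_limit {J} D {L} p.

Definition is_cocone (J : SmallCat) (D : Diagram J) (C : Arity)
    (q : forall j, ArMor (dob D j) C) : Prop :=
  forall j k (u : chom j k) (R : OMonad) (A : SET) (x : ar_mod (dob D j) R A),
    armc (q k) (armc (dhom D u) x) = armc (q j) x.
Arguments is_cocone {J} D {C} q.

Definition is_colimit (J : SmallCat) (D : Diagram J) (C : Arity)
    (q : forall j, ArMor (dob D j) C) : Prop :=
  is_cocone D q /\
  forall (C' : Arity) (q' : forall j, ArMor (dob D j) C'), is_cocone D q' ->
    exists u : ArMor C C',
      (forall j (R : OMonad) (A : SET) (x : ar_mod (dob D j) R A),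
          armc u (armc (q j) x) = armc (q' j) x) /\
      (forall v : ArMor C C',
          (forall j (R : OMonad) (A : SET) (x : ar_mod (dob D j) R A),
              armc v (armc (q j) x) = armc (q' j) x) ->
          forall (R : OMonad) (A : SET) (x : ar_mod C R A), armc v x = armc u x).
Arguments is_colimit {J} D {C} q.

(* Limits and colimits of arities are computed pointwise: at a monad R and a set A, the limit
   of a diagram is the set of its compatible families and the colimit is the quotient of the
   disjoint union of its values.  All the module structure then transfers componentwise; the
   one real point is that these pointwise modules are again omega-cocontinuous, i.e. that in
   Set finite limits and arbitrary colimits commute with colimits of omega-chains.  For this
   the colimit of a chain is characterised as its points modulo "eventually equal": given
   finitely many objects and arrows, finitely many witnesses of eventual equality can be
   pushed to a common level. *)

From Stdlib Require Import List Lia PeanoNat ProofIrrelevance FunctionalExtensionality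
  PropExtensionality IndefiniteDescription Eqdep Eqdep_dec Relation_Operators.

Definition eventually (P : nat -> Prop) : Prop := exists N, forall M, N <= M -> P M.

Section Chains.
Variables (X : nat -> SET) (s : forall n, X n -> X (S n)).

Definition chain_step (p : sigT X) : sigT X := existT X (S (projT1 p)) (s _ (projT2 p)).

Definition chain_iter (d : nat) : sigT X -> sigT X := Nat.iter d chain_step.

Definition chain_rel (p q : sigT X) : Prop := exists d d', chain_iter d p = chain_iter d' q.

Fixpoint chain_shift (n d : nat) (x : X n) : X (d + n) :=
  match d with 0 => x | S d' => s (d' + n) (chain_shift n d' x) end.

Lemma chain_iter_add a b p : chain_iter (a + b) p = chain_iter a (chain_iter b p).
Proof. apply Nat.iter_add. Qed.

Lemma chain_iter_shift d n x :
  chain_iter d (existT X n x) = existT X (d + n) (chain_shift n d x).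
Proof.
  induction d as [|d IH]; [reflexivity|].
  unfold chain_iter in *; simpl. rewrite IH. reflexivity.
Qed.

Lemma chain_iter_level d p : projT1 (chain_iter d p) = d + projT1 p.
Proof. destruct p as [n x]. rewrite chain_iter_shift. reflexivity. Qed.

Lemma chain_rel_refl p : chain_rel p p.
Proof. exists 0, 0. reflexivity. Qed.

Lemma chain_rel_sym p q : chain_rel p q -> chain_rel q p.
Proof. intros (d & d' & E). exists d', d. auto. Qed.

Lemma chain_rel_trans p q r : chain_rel p q -> chain_rel q r -> chain_rel p r.
Proof.
  intros (d & d' & E) (e & e' & E'). exists (e + d), (d' + e').
  rewrite chain_iter_add, E, <- chain_iter_add, Nat.add_comm, chain_iter_add, E',
    <- chain_iter_add.
  reflexivity.
Qed.

Lemma chain_rel_iter d p : chain_rel p (chain_iter d p).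
Proof. exists d, 0. reflexivity. Qed.

Lemma chain_rel_at_level p M : projT1 p <= M -> exists x : X M, chain_rel p (existT X M x).
Proof.
  destruct p as [n x]; simpl; intros HM.
  replace M with (M - n + n) by lia.
  exists (chain_shift n (M - n) x). rewrite <- chain_iter_shift. apply chain_rel_iter.
Qed.

Definition cocone_at {C : SET} (c : forall n, X n -> C) (p : sigT X) : C :=
  c (projT1 p) (projT2 p).

Section Cocone.
Variables (C : SET) (c : forall n, X n -> C) (Hc : is_cocone_chain X s C c).

Lemma cocone_shift n d x : c (d + n) (chain_shift n d x) = c n x.
Proof. induction d as [|d IH]; [reflexivity|]. simpl. rewrite Hc. exact IH. Qed.

Lemma cocone_rel p q : chain_rel p q -> cocone_at c p = cocone_at c q.
Proof.
  assert (Hiter : forall d p, cocone_at c (chain_iter d p) = cocone_at c p).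
  { intros d [n x]. rewrite chain_iter_shift. apply cocone_shift. }
  intros (d & d' & E). rewrite <- (Hiter d p), E. apply Hiter.
Qed.
End Cocone.

Section Colimit.
Variables (C : SET) (c : forall n, X n -> C).

(* The image of [c] and all of [C] both factor the constant cocone [True] into [Prop]. *)
Lemma colim_chain_surj : is_colim_chain X s C c -> forall y, exists p, cocone_at c p = y.
Proof.
  intros [_ Huniv] y.
  destruct (Huniv Prop (fun _ _ => True)) as [u [_ Hu]]; [intros n x; reflexivity|].
  assert (Himage : (exists p, cocone_at c p = y) = u y).
  { apply (Hu (fun y => exists p, cocone_at c p = y)). intros n x.
    apply propositional_extensionality. split; [trivial|].
    intros _. exists (existT X n x). reflexivity. }
  rewrite Himage, <- (Hu (fun _ => True) (fun _ _ => eq_refl) y). exact I.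
Qed.

(* The classes of [chain_rel] form a cocone into [sigT X -> Prop]. *)
Lemma colim_chain_rel : is_colim_chain X s C c ->
  forall p q, cocone_at c p = cocone_at c q -> chain_rel p q.
Proof.
  intros [_ Huniv] [n x] [m y] E.
  destruct (Huniv (sigT X -> Prop) (fun n x => chain_rel (existT X n x))) as [u [Hu _]].
  { intros k z. apply functional_extensionality. intros r.
    apply propositional_extensionality.
    change (existT X (S k) (s k z)) with (chain_iter 1 (existT X k z)).
    split; intros H.
    - exact (chain_rel_trans _ _ _ (chain_rel_iter 1 _) H).
    - exact (chain_rel_trans _ _ _ (chain_rel_sym _ _ (chain_rel_iter 1 _)) H). }
  assert (Hclass := f_equal u E). unfold cocone_at in Hclass; simpl in Hclass.
  rewrite !Hu in Hclass. rewrite Hclass. apply chain_rel_refl.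
Qed.

Lemma colim_chain_intro : is_cocone_chain X s C c ->
  (forall y, exists p, cocone_at c p = y) ->
  (forall p q, cocone_at c p = cocone_at c q -> chain_rel p q) ->
  is_colim_chain X s C c.
Proof.
  intros Hc Hsurj Hrel. split; [exact Hc|]. intros D d Hd.
  exists (fun y => cocone_at d (proj1_sig (constructive_indefinite_description _ (Hsurj y)))).
  split.
  - intros n x. destruct constructive_indefinite_description as [p Hp]; simpl.
    apply (cocone_rel D d Hd p (existT X n x)), Hrel, Hp.
  - intros v Hv y. destruct constructive_indefinite_description as [[n x] Hp]; simpl.
    rewrite <- Hp. apply Hv.
Qed.

Lemma colim_chain_surj_at : is_colim_chain X s C c ->
  forall y, eventually (fun M => exists x : X M, c M x = y).
Proof.
  intros Hcol y. destruct (colim_chain_surj Hcol y) as [[n x] Hx].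
  exists n. intros M HM. replace M with (M - n + n) by lia.
  exists (chain_shift n (M - n) x). rewrite cocone_shift; [exact Hx|apply Hcol].
Qed.

Lemma colim_chain_eq_level : is_colim_chain X s C c ->
  forall n x y, c n x = c n y -> eventually (fun d => chain_shift n d x = chain_shift n d y).
Proof.
  intros Hcol n x y Exy.
  destruct (colim_chain_rel Hcol (existT X n x) (existT X n y) Exy) as (d & d' & E).
  assert (d' = d) as ->.
  { apply (f_equal (@projT1 _ _)) in E. rewrite !chain_iter_level in E. simpl in E. lia. }
  exists d. intros e He. replace e with (e - d + d) by lia.
  apply (inj_pair2_eq_dec _ Nat.eq_dec X).
  rewrite <- !chain_iter_shift, !chain_iter_add, E. reflexivity.
Qed.
End Colimit.
End Chains.

Arguments chain_rel {X} s p q.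
Arguments chain_shift {X} s n d x.
Arguments cocone_at {X C} c p.

Section ChainMaps.
Variables (X Y : nat -> SET) (s : forall n, X n -> X (S n)) (t : forall n, Y n -> Y (S n))
  (phi : forall n, X n -> Y n) (Hphi : forall n x, phi (S n) (s n x) = t n (phi n x)).

Definition chain_map_point (p : sigT X) : sigT Y := existT Y (projT1 p) (phi _ (projT2 p)).

Lemma chain_shift_map n d x : phi (d + n) (chain_shift s n d x) = chain_shift t n d (phi n x).
Proof. induction d as [|d IH]; [reflexivity|]. simpl. rewrite Hphi, IH. reflexivity. Qed.

Lemma chain_rel_map p q : chain_rel s p q -> chain_rel t (chain_map_point p) (chain_map_point q).
Proof.
  assert (Hiter : forall d p,
    chain_map_point (chain_iter X s d p) = chain_iter Y t d (chain_map_point p)).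
  { intros d [n x]. unfold chain_map_point at 2; simpl.
    rewrite !chain_iter_shift, <- chain_shift_map. reflexivity. }
  intros (d & d' & E). exists d, d'. rewrite <- !Hiter, E. reflexivity.
Qed.
End ChainMaps.

Lemma eventually_forall {T : Type} (P : T -> nat -> Prop) :
  (exists l : list T, forall t, In t l) ->
  (forall t, eventually (P t)) -> eventually (fun M => forall t, P t M).
Proof.
  intros [l Hl] HP.
  assert (Hlist : eventually (fun M => forall t, In t l -> P t M)).
  { clear Hl. induction l as [|a l IH].
    - exists 0. intros M _ t [].
    - destruct (HP a) as [N1 H1], IH as [N2 H2].
      exists (N1 + N2). intros M HM t [<-|Ht]; [apply H1|apply H2]; auto; lia. }
  destruct Hlist as [N HN]. exists N. intros M HM t. apply HN; auto.
Qed.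

Section Quotient.
Variables (T : SET) (r : T -> T -> Prop).

Definition quot_equiv : T -> T -> Prop := clos_refl_sym_trans T r.

Definition quot : SET := {P : T -> Prop | exists t, P = quot_equiv t}.

Definition quot_in (t : T) : quot := exist _ (quot_equiv t) (ex_intro _ t eq_refl).

Lemma quot_in_eq t t' : quot_equiv t t' -> quot_in t = quot_in t'.
Proof.
  intros H. apply eq_sig_hprop; [intros; apply proof_irrelevance|]. simpl.
  apply functional_extensionality. intros z. apply propositional_extensionality.
  split; intros Hz; eapply rst_trans; eauto using rst_sym.
Qed.

Lemma quot_in_inv t t' : quot_in t = quot_in t' -> quot_equiv t t'.
Proof.
  intros H. apply (f_equal (@proj1_sig _ _)) in H. simpl in H.
  rewrite H. apply rst_refl.
Qed.

Lemma quot_in_surj (q : quot) : exists t, quot_in t = q.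
Proof.
  destruct q as [P [t ->]]. exists t.
  apply eq_sig_hprop; [intros; apply proof_irrelevance|reflexivity].
Qed.

Lemma quot_ind (P : quot -> Prop) : (forall t, P (quot_in t)) -> forall q, P q.
Proof. intros H q. destruct (quot_in_surj q) as [t <-]. apply H. Qed.

Definition quot_rec {Y : SET} (f : T -> Y) (q : quot) : Y :=
  f (proj1_sig (constructive_indefinite_description _ (quot_in_surj q))).

Lemma quot_rec_in {Y : SET} (f : T -> Y) (Hf : forall a b, r a b -> f a = f b) t :
  quot_rec f (quot_in t) = f t.
Proof.
  unfold quot_rec. destruct constructive_indefinite_description as [t' Ht']; simpl.
  apply quot_in_inv in Ht'. induction Ht'; auto; congruence.
Qed.
End Quotient.

Arguments quot_in {T r} t.
Arguments quot_rec {T r Y} f q.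

Record Family (J : SmallCat) : Type := {
  fam :> cob J -> SET;
  fam_map : forall j k : cob J, chom j k -> fam j -> fam k }.
Arguments fam_map {J} F {j k} u x : rename.

Record FamMor {J : SmallCat} (F G : Family J) : Type := {
  fm : forall j, F j -> G j;
  fm_nat : forall j k (u : chom j k) (x : F j), fam_map G u (fm j x) = fm k (fam_map F u x) }.
Arguments fm {J F G} h j x : rename.

Section CompatibleFamilies.
Context {J : SmallCat}.

Definition compatible (F : Family J) : SET :=
  {x : forall j, F j | forall j k (u : chom j k), fam_map F u (x j) = x k}.

Definition compat_intro {F : Family J} (x : forall j, F j)
  (Hx : forall j k (u : chom j k), fam_map F u (x j) = x k) : compatible F := exist _ x Hx.

Lemma compatible_ext {F : Family J} (x y : compatible F) :
  (forall j, proj1_sig x j = proj1_sig y j) -> x = y.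
Proof.
  intros H. apply eq_sig_hprop; [intros; apply proof_irrelevance|].
  apply functional_extensionality_dep, H.
Qed.

Lemma compat_map_compatible {F G : Family J} (h : FamMor F G) (x : compatible F) :
  forall j k (u : chom j k), fam_map G u (fm h j (proj1_sig x j)) = fm h k (proj1_sig x k).
Proof. intros j k u. rewrite fm_nat. f_equal. apply (proj2_sig x). Qed.

Definition compat_map {F G : Family J} (h : FamMor F G) (x : compatible F) : compatible G :=
  compat_intro (fun j => fm h j (proj1_sig x j)) (compat_map_compatible h x).
End CompatibleFamilies.

Section GluedFamilies.
Context {J : SmallCat}.

Definition glue_step (F : Family J) (t t' : {j : cob J & F j}) : Prop :=
  exists u : chom (projT1 t) (projT1 t'), projT2 t' = fam_map F u (projT2 t).

Definition glue (F : Family J) : SET := quot {j : cob J & F j} (glue_step F).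

Definition glue_in {F : Family J} (j : cob J) (x : F j) : glue F := quot_in (existT F j x).

Lemma glue_in_step {F : Family J} j k (u : chom j k) (x : F j) :
  glue_in k (fam_map F u x) = glue_in j x.
Proof. symmetry. apply quot_in_eq, rst_step. exists u. reflexivity. Qed.

Lemma glue_ind {F : Family J} (P : glue F -> Prop) :
  (forall j x, P (glue_in j x)) -> forall z, P z.
Proof. intros H. apply quot_ind. intros [j x]. apply H. Qed.

Lemma glue_in_inv {F : Family J} j k (x : F j) (y : F k) :
  glue_in j x = glue_in k y -> quot_equiv _ (glue_step F) (existT F j x) (existT F k y).
Proof. apply quot_in_inv. Qed.

Definition glue_rec {F : Family J} {Y : SET} (q : forall j, F j -> Y) : glue F -> Y :=
  quot_rec (fun t => q (projT1 t) (projT2 t)).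

Lemma glue_rec_in {F : Family J} {Y : SET} (q : forall j, F j -> Y)
  (Hq : forall j k (u : chom j k) x, q k (fam_map F u x) = q j x) j x :
  glue_rec q (glue_in j x) = q j x.
Proof.
  apply quot_rec_in. intros [i a] [k b] [u Hu]; simpl in *. subst b. symmetry. apply Hq.
Qed.

Definition glue_map {F G : Family J} (h : FamMor F G) : glue F -> glue G :=
  glue_rec (fun j x => glue_in j (fm h j x)).

Lemma glue_map_in {F G : Family J} (h : FamMor F G) j x :
  glue_map h (glue_in j x) = glue_in j (fm h j x).
Proof.
  apply (glue_rec_in (fun j x => glue_in j (fm h j x))). intros i k u a.
  rewrite <- fm_nat. apply glue_in_step.
Qed.
End GluedFamilies.

Section CommuteWithChains.
Context {J : SmallCat} (X : nat -> Family J) (s : forall n, FamMor (X n) (X (S n)))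
  (C : Family J) (c : forall n, FamMor (X n) C)
  (Hcol : forall j, is_colim_chain (fun n => X n j) (fun n => fm (s n) j) (C j)
                      (fun n => fm (c n) j)).

Local Notation shift j := (chain_shift (fun n => fm (s n) j)).

Lemma fam_map_shift j k (u : chom j k) n d (x : X n j) :
  fam_map (X (d + n)) u (shift j n d x) = shift k n d (fam_map (X n) u x).
Proof.
  apply (chain_shift_map (fun n => X n j) (fun n => X n k) _ _ (fun n => fam_map (X n) u)).
  intros m y. apply fm_nat.
Qed.

Lemma compatible_colim_cocone :
  is_cocone_chain (fun n => compatible (X n)) (fun n => compat_map (s n)) (compatible C)
    (fun n => compat_map (c n)).
Proof. intros n x. apply compatible_ext. intros j. apply (proj1 (Hcol j)). Qed.

Lemma proj_compatible_shift j n d (x : compatible (X n)) :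
  proj1_sig (chain_shift (fun n => compat_map (s n)) n d x) j = shift j n d (proj1_sig x j).
Proof.
  apply (chain_shift_map (fun n => compatible (X n)) (fun n => X n j)
    (fun n => compat_map (s n)) (fun n => fm (s n) j) (fun n x => proj1_sig x j)).
  reflexivity.
Qed.

Lemma glue_colim_cocone :
  is_cocone_chain (fun n => glue (X n)) (fun n => glue_map (s n)) (glue C)
    (fun n => glue_map (c n)).
Proof.
  intros n. apply glue_ind. intros j x. rewrite !glue_map_in. f_equal. apply (proj1 (Hcol j)).
Qed.

Lemma glue_colim_surj (z : glue C) : exists p, cocone_at (fun n => glue_map (c n)) p = z.
Proof.
  revert z. apply glue_ind. intros j y.
  destruct (colim_chain_surj _ _ _ _ (Hcol j) y) as [[n x] Hx].
  exists (existT (fun n => glue (X n)) n (glue_in j x)). unfold cocone_at; simpl.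
  rewrite glue_map_in. f_equal. exact Hx.
Qed.

Lemma glue_colim_rel_component j n x m x' :
  fm (c n) j x = fm (c m) j x' ->
  chain_rel (fun n => glue_map (s n))
    (existT (fun n => glue (X n)) n (glue_in j x)) (existT (fun n => glue (X n)) m (glue_in j x')).
Proof.
  intros E.
  apply (chain_rel_map (fun n => X n j) (fun n => glue (X n)) _ _ (fun n => @glue_in _ (X n) j)
    (fun n y => eq_sym (glue_map_in (s n) j y)) (existT _ n x) (existT _ m x')).
  exact (colim_chain_rel _ _ _ _ (Hcol j) (existT _ n x) (existT _ m x') E).
Qed.

(* Induction along the equivalence generated by [glue_step], choosing at each intermediate
   point a representative in some [X n], which exists by surjectivity of [c]. *)
Lemma glue_colim_rel_equiv t t' : quot_equiv _ (glue_step C) t t' ->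
  forall j n x k m x', t = existT C j (fm (c n) j x) -> t' = existT C k (fm (c m) k x') ->
  chain_rel (fun n => glue_map (s n))
    (existT (fun n => glue (X n)) n (glue_in j x)) (existT (fun n => glue (X n)) m (glue_in k x')).
Proof.
  induction 1 as [a b [u Hu] | a | a b _ IH | a b d _ IH1 _ IH2];
    intros j n x k m x' Ha Hb; subst a.
  - subst b. simpl in u, Hu. rewrite <- (glue_in_step j k u x).
    apply glue_colim_rel_component. rewrite <- fm_nat. symmetry. exact Hu.
  - assert (j = k) as <- by exact (f_equal (@projT1 _ _) Hb).
    apply inj_pair2 in Hb. apply glue_colim_rel_component, Hb.
  - apply chain_rel_sym, IH; auto.
  - destruct b as [i w]. destruct (colim_chain_surj _ _ _ _ (Hcol i) w) as [[l z] <-].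
    apply (chain_rel_trans _ _ _ (existT _ l (glue_in i z))); [apply IH1|apply IH2]; auto.
Qed.

Lemma glue_colim_rel p q :
  cocone_at (fun n => glue_map (c n)) p = cocone_at (fun n => glue_map (c n)) q ->
  chain_rel (fun n => glue_map (s n)) p q.
Proof.
  destruct p as [n z], q as [m z'].
  induction z as [j x] using glue_ind. induction z' as [k x'] using glue_ind.
  unfold cocone_at; simpl. rewrite !glue_map_in. intros E.
  apply (glue_colim_rel_equiv _ _ (glue_in_inv _ _ _ _ E)); reflexivity.
Qed.

Lemma glue_colim_chain :
  is_colim_chain (fun n => glue (X n)) (fun n => glue_map (s n)) (glue C)
    (fun n => glue_map (c n)).
Proof.
  apply colim_chain_intro; [apply glue_colim_cocone|apply glue_colim_surj|apply glue_colim_rel].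
Qed.

Section FiniteIndex.
Hypothesis HJ : finite_cat J.

Lemma eventually_forall_hom (P : forall j k : cob J, chom j k -> nat -> Prop) :
  (forall j k u, eventually (P j k u)) -> eventually (fun M => forall j k u, P j k u M).
Proof.
  destruct HJ as [Hobj Hhom]. intros HP.
  apply (eventually_forall (fun j M => forall k u, P j k u M) Hobj). intros j.
  apply (eventually_forall (fun k M => forall u, P j k u M) Hobj). intros k.
  apply (eventually_forall (P j k) (Hhom j k)), HP.
Qed.

Lemma compatible_colim_surj (y : compatible C) :
  exists p, cocone_at (fun n => compat_map (c n)) p = y.
Proof.
  destruct (eventually_forall (fun j M => exists a : X M j, fm (c M) j a = proj1_sig y j)
    (proj1 HJ) (fun j => colim_chain_surj_at _ _ _ _ (Hcol j) (proj1_sig y j))) as [M HM].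
  assert (Hchoice : exists a : forall j, X M j, forall j, fm (c M) j (a j) = proj1_sig y j).
  { exists (fun j => proj1_sig (constructive_indefinite_description _ (HM M (le_n M) j))).
    intros j. destruct constructive_indefinite_description as [aj Haj]. exact Haj. }
  destruct Hchoice as [a Ha].
  assert (Hagree : forall j k (u : chom j k),
    eventually (fun d => shift k M d (fam_map (X M) u (a j)) = shift k M d (a k))).
  { intros j k u. apply (colim_chain_eq_level _ _ _ _ (Hcol k)).
    rewrite <- fm_nat, !Ha. apply (proj2_sig y). }
  destruct (eventually_forall_hom _ Hagree) as [E HE]. specialize (HE E (le_n E)).
  assert (Hb : forall j k (u : chom j k),
    fam_map (X (E + M)) u (shift j M E (a j)) = shift k M E (a k)).
  { intros j k u. rewrite fam_map_shift. apply HE. }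
  exists (existT (fun n => compatible (X n)) (E + M) (exist _ (fun j => shift j M E (a j)) Hb)).
  apply compatible_ext. intros j. simpl. rewrite <- Ha.
  exact (cocone_shift _ _ _ (fun n => fm (c n) j) (proj1 (Hcol j)) M E (a j)).
Qed.

Lemma compatible_colim_rel p q :
  cocone_at (fun n => compat_map (c n)) p = cocone_at (fun n => compat_map (c n)) q ->
  chain_rel (fun n => compat_map (s n)) p q.
Proof.
  intros Hpq. set (M := projT1 p + projT1 q).
  destruct (chain_rel_at_level _ (fun n => compat_map (s n)) p M) as [a Ha]; [unfold M; lia|].
  destruct (chain_rel_at_level _ (fun n => compat_map (s n)) q M) as [b Hb]; [unfold M; lia|].
  assert (Hab : compat_map (c M) a = compat_map (c M) b).
  { apply (cocone_rel _ _ _ _ compatible_colim_cocone) in Ha, Hb.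
    change (cocone_at (fun n => compat_map (c n)) (existT _ M a)
      = cocone_at (fun n => compat_map (c n)) (existT _ M b)).
    congruence. }
  destruct (eventually_forall
    (fun j d => shift j M d (proj1_sig a j) = shift j M d (proj1_sig b j)) (proj1 HJ)
    (fun j => colim_chain_eq_level _ _ _ _ (Hcol j) _ _ _ (f_equal (fun z => proj1_sig z j) Hab)))
    as [E HE].
  apply (chain_rel_trans _ _ _ _ _ Ha), (chain_rel_trans _ _ _ (existT _ M b));
    [|now apply chain_rel_sym].
  exists E, E. rewrite !chain_iter_shift. f_equal. apply compatible_ext. intros j.
  rewrite !proj_compatible_shift. apply HE; auto.
Qed.

Lemma compatible_colim_chain :
  is_colim_chain (fun n => compatible (X n)) (fun n => compat_map (s n)) (compatible C)
    (fun n => compat_map (c n)).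
Proof.
  apply colim_chain_intro;
    [apply compatible_colim_cocone|apply compatible_colim_surj|apply compatible_colim_rel].
Qed.
End FiniteIndex.
End CommuteWithChains.

Section Fibers.
Context {J : SmallCat} (D : Diagram J).

Definition fiber (R : OMonad) (A : SET) : Family J :=
  {| fam j := ar_mod (dob D j) R A; fam_map j k u := @armc _ _ (dhom D u) R A |}.

Definition fiber_fmap (R : OMonad) {A B : SET} (h : A -> B) : FamMor (fiber R A) (fiber R B).
Proof.
  refine (Build_FamMor _ (fiber R A) (fiber R B) (fun j => fmap (ar_mod (dob D j) R) h) _).
  intros j k u x. apply modm_nat.
Defined.

Definition fiber_act (R : OMonad) (A : SET) : FamMor (fiber R (R A)) (fiber R A).
Proof.
  refine (Build_FamMor _ (fiber R (R A)) (fiber R A) (fun j => @act _ (ar_mod (dob D j) R) A) _).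
  intros j k u x. simpl. unfold armc. rewrite modm_act. simpl. rewrite fmap_id. reflexivity.
Defined.

Definition fiber_map {R S : OMonad} (f : MonMor R S) (A : SET) :
  FamMor (fiber R A) (fiber S A).
Proof.
  refine (Build_FamMor _ (fiber R A) (fiber S A)
    (fun j => @modm _ _ _ _ _ (ar_map (dob D j) f) A) _).
  intros j k u x. symmetry. apply arm_nat.
Defined.
End Fibers.

Section LimitArity.
Context {J : SmallCat} (HJ : finite_cat J) (D : Diagram J).

Definition lim_functor (R : OMonad) : Functor.
Proof.
  refine {| fobj A := compatible (fiber D R A); fmap A B h := compat_map (fiber_fmap D R h) |}.
  - intros A x. apply compatible_ext. intros j. apply fmap_id.
  - intros A B C f g x. apply compatible_ext. intros j. apply fmap_comp.
Defined.

Definition lim_module (R : OMonad) : Module R.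
Proof.
  refine {| mod_fun := lim_functor R; act A := compat_map (fiber_act D R A) |};
    intros; apply compatible_ext; intros j; simpl.
  - apply act_nat.
  - apply act_assoc.
  - apply act_unit.
Defined.

Lemma lim_module_omega (R : OMonad) : omega_cocont (lim_module R).
Proof.
  intros X s C c Hcol.
  exact (compatible_colim_chain (fun n => fiber D R (X n)) (fun n => fiber_fmap D R (s n))
    (fiber D R C) (fun n => fiber_fmap D R (c n))
    (fun j => omod_omega _ (ar_mod (dob D j) R) X s C c Hcol) HJ).
Qed.

Definition lim_module_map {R S : OMonad} (f : MonMor R S) :
  ModMor f (lim_module R) (lim_module S).
Proof.
  refine (Build_ModMor R S f (lim_module R) (lim_module S)
    (fun A => compat_map (fiber_map D f A)) _ _);
    intros; apply compatible_ext; intros j; simpl.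
  - apply modm_nat.
  - apply modm_act.
Defined.

Definition lim_arity : Arity.
Proof.
  refine (Build_Arity (fun R => Build_OModule R (lim_module R) (lim_module_omega R))
    (fun R S f => lim_module_map f) _ _);
    intros; apply compatible_ext; intros j; simpl.
  - apply ar_map_id.
  - apply ar_map_comp.
Defined.

Definition lim_proj_module (j : cob J) (R : OMonad) :
  ModMor (MonMor_id R) (ar_mod lim_arity R) (ar_mod (dob D j) R).
Proof.
  refine (Build_ModMor R R (MonMor_id R) (ar_mod lim_arity R) (ar_mod (dob D j) R)
    (fun A x => proj1_sig x j) _ _); intros; simpl.
  - reflexivity.
  - rewrite fmap_id. reflexivity.
Defined.

Definition lim_proj (j : cob J) : ArMor lim_arity (dob D j).
Proof. refine (Build_ArMor lim_arity (dob D j) (lim_proj_module j) _). reflexivity. Defined.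

Section Lift.
Variables (L : Arity) (p : forall j, ArMor L (dob D j)) (Hp : is_cone D p).

Definition lim_lift_module (R : OMonad) :
  ModMor (MonMor_id R) (ar_mod L R) (ar_mod lim_arity R).
Proof.
  refine (Build_ModMor R R (MonMor_id R) (ar_mod L R) (ar_mod lim_arity R)
    (fun A x => compat_intro (F := fiber D R A) (fun j => armc (p j) x)
       (fun j k u => Hp j k u R A x)) _ _);
    intros; apply compatible_ext; intros j; simpl.
  - apply modm_nat.
  - apply modm_act.
Defined.

Definition lim_lift : ArMor L lim_arity.
Proof.
  refine (Build_ArMor L lim_arity lim_lift_module _).
  intros; apply compatible_ext; intros j. apply arm_nat.
Defined.
End Lift.

Lemma lim_arity_is_limit : is_limit D lim_proj.
Proof.
  split.
  - intros j k u R A x. exact (proj2_sig x j k u).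
  - intros L p Hp. exists (lim_lift L p Hp). split.
    + intros; reflexivity.
    + intros v Hv R A x. apply compatible_ext. intros j. apply Hv.
Qed.
End LimitArity.

Section ColimitArity.
Context {J : SmallCat} (D : Diagram J).

Definition colim_functor (R : OMonad) : Functor.
Proof.
  refine (Build_Functor (fun A => glue (fiber D R A)) (fun A B h => glue_map (fiber_fmap D R h))
    _ _).
  - intros A. apply glue_ind. intros j x. rewrite glue_map_in. f_equal. apply fmap_id.
  - intros A B C f g. apply glue_ind. intros j x. rewrite !glue_map_in. f_equal. apply fmap_comp.
Defined.

Definition colim_module (R : OMonad) : Module R.
Proof.
  refine (Build_Module R (colim_functor R) (fun A => glue_map (fiber_act D R A)) _ _ _);
    intros A; [intros B f| |]; apply glue_ind; intros j x; simpl; rewrite !glue_map_in;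
    f_equal.
  - apply act_nat.
  - apply act_assoc.
  - apply act_unit.
Defined.

Lemma colim_module_omega (R : OMonad) : omega_cocont (colim_module R).
Proof.
  intros X s C c Hcol.
  exact (glue_colim_chain (fun n => fiber D R (X n)) (fun n => fiber_fmap D R (s n))
    (fiber D R C) (fun n => fiber_fmap D R (c n))
    (fun j => omod_omega _ (ar_mod (dob D j) R) X s C c Hcol)).
Qed.

Definition colim_module_map {R S : OMonad} (f : MonMor R S) :
  ModMor f (colim_module R) (colim_module S).
Proof.
  refine (Build_ModMor R S f (colim_module R) (colim_module S)
    (fun A => glue_map (fiber_map D f A)) _ _);
    intros A; [intros B h|]; apply glue_ind; intros j x; simpl; rewrite !glue_map_in;
    f_equal.
  - apply modm_nat.
  - apply modm_act.
Defined.

Definition colim_arity : Arity.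
Proof.
  refine (Build_Arity (fun R => Build_OModule R (colim_module R) (colim_module_omega R))
    (fun R S f => colim_module_map f) _ _);
    intros; revert x; apply glue_ind; intros j x; simpl; rewrite !glue_map_in; f_equal.
  - apply ar_map_id.
  - apply ar_map_comp.
Defined.

Definition colim_inj_module (j : cob J) (R : OMonad) :
  ModMor (MonMor_id R) (ar_mod (dob D j) R) (ar_mod colim_arity R).
Proof.
  refine (Build_ModMor R R (MonMor_id R) (ar_mod (dob D j) R) (ar_mod colim_arity R)
    (fun A x => glue_in (F := fiber D R A) j x) _ _); intros; simpl; rewrite !glue_map_in.
  - reflexivity.
  - simpl. rewrite fmap_id. reflexivity.
Defined.

Definition colim_inj (j : cob J) : ArMor (dob D j) colim_arity.
Proof.
  refine (Build_ArMor (dob D j) colim_arity (colim_inj_module j) _).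
  intros. simpl. rewrite glue_map_in. reflexivity.
Defined.

Section Factor.
Variables (C : Arity) (q : forall j, ArMor (dob D j) C) (Hq : is_cocone D q).

Definition colim_factor_module (R : OMonad) :
  ModMor (MonMor_id R) (ar_mod colim_arity R) (ar_mod C R).
Proof.
  refine (Build_ModMor R R (MonMor_id R) (ar_mod colim_arity R) (ar_mod C R)
    (fun A => glue_rec (F := fiber D R A) (fun j x => armc (q j) x)) _ _);
    intros A; [intros B h|]; apply glue_ind; intros j x; simpl;
    rewrite ?glue_map_in, !glue_rec_in by (intros; apply Hq).
  - apply modm_nat.
  - apply modm_act.
Defined.

Definition colim_factor : ArMor colim_arity C.
Proof.
  refine (Build_ArMor colim_arity C colim_factor_module _).
  intros R S f A. apply glue_ind. intros j x. simpl.
  rewrite glue_map_in, !glue_rec_in by (intros; apply Hq). apply arm_nat.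
Defined.
End Factor.

Lemma colim_arity_is_colimit : is_colimit D colim_inj.
Proof.
  split.
  - intros j k u R A x. exact (glue_in_step (F := fiber D R A) j k u x).
  - intros C q Hq.
    assert (Hfactor : forall j R A (x : ar_mod (dob D j) R A),
      armc (colim_factor C q Hq) (armc (colim_inj j) x) = armc (q j) x).
    { intros j R A x.
      exact (glue_rec_in (F := fiber D R A) (fun j x => armc (q j) x)
        (fun j k u y => Hq j k u R A y) j x). }
    exists (colim_factor C q Hq). split; [exact Hfactor|].
    intros v Hv R A. apply glue_ind. intros j x.
    exact (eq_trans (Hv j R A x) (eq_sym (Hfactor j R A x))).
Qed.
End ColimitArity.

Theorem theorem1 :
  (forall J : SmallCat, finite_cat J -> forall D : Diagram J,
     exists (L : Arity) (p : forall j, ArMor L (dob D j)), is_limit D p) /\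
  (forall (J : SmallCat) (D : Diagram J),
     exists (C : Arity) (q : forall j, ArMor (dob D j) C), is_colimit D q).
Proof.
  split.
  - intros J HJ D. exists (lim_arity HJ D), (lim_proj HJ D). apply lim_arity_is_limit.
  - intros J D. exists (colim_arity D), (colim_inj D). apply colim_arity_is_colimit.
Qed.
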